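(* Let $p$ be an odd prime, $q$ a power of $p$, and $n\ge 0$ an integer. Let $V=\{y\in\mathbb{F}_{q^2}: y^q=1-y\}$ and $S=(\mathbb{F}_q\cup V)\setminus\{\tfrac12\}$. Then $F_n(1,x)$ is a permutation polynomial of $\mathbb{F}_q$ if and only if the map $g:S\to\mathbb{F}_{q^2}$, $g(y)=\dfrac{y^n-(1-y)^n}{2y-1}$, is 2-to-1 (every element of $g(S)$ has exactly two preimages in $S$) and $g(y)\neq \dfrac{n}{2^{n-1}}$ for every $y\in S$.
   Context: For an integer $n\ge 1$, the $n$-th reversed Dickson polynomial of the third kind is $F_n(a,x)=\sum_{i=0}^{\lfloor n/2\rfloor}\frac{n-2i}{n-i}\binom{n-i}{i}(-x)^i a^{n-2i}$, where each coefficient $\frac{n-2i}{n-i}\binom{n-i}{i}$ is an integer (read in $\mathbb{F}_q$), and $F_0(a,x)=0$. A polynomial $f\in\mathbb{F}_q[x]$ is a permutation polynomial of $\mathbb{F}_q$ if $c\mapsto f(c)$ is a bijection of $\mathbb{F}_q$. *)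

From HB Require Import structures.
From mathcomp Require Import all_boot all_order all_algebra all_field.
Set Implicit Arguments. Unset Strict Implicit. Unset Printing Implicit Defensive.
Import GRing.Theory.
Local Open Scope ring_scope.

(* Integer coefficient (n-2i)/(n-i) * C(n-i,i), computed as an exact
   natural-number division. *)
Definition rd3coef (n i : nat) : nat :=
  (((n - i.*2) * 'C(n - i, i)) %/ (n - i))%N.

(* n-th reversed Dickson polynomial of the third kind F_n(a, x) in R[x];
   F_0 = 0. *)
Definition rdickson3 (R : nzRingType) (n : nat) (a : R) : {poly R} :=
  if n is 0 then 0 else
  \sum_(i < n./2.+1) ((rd3coef n i)%:R * a ^+ (n - i.*2)) *: (- 'X) ^+ i.

Definition bij_on (T : finType) (A : {set T}) (f : T -> T) : Prop :=
  [/\ {in A, forall x, f x \in A},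
      {in A &, injective f} &
      {in A, forall y, exists2 x, x \in A & f x = y}].

Definition Fq (L : finFieldType) (q : nat) : {set L} := [set x : L | x ^+ q == x].
Definition Vset (L : finFieldType) (q : nat) : {set L} :=
  [set y : L | y ^+ q == 1 - y].
Definition Sset (L : finFieldType) (q : nat) : {set L} :=
  (Fq L q :|: Vset L q) :\ (2%:R)^-1.
Definition gmap (L : finFieldType) (n : nat) (y : L) : L :=
  (y ^+ n - (1 - y) ^+ n) / (2%:R * y - 1).

From HB Require Import structures.
From mathcomp Require Import all_boot all_order all_algebra all_field.
From mathcomp Require Import zify ring.
Set Implicit Arguments. Unset Strict Implicit. Unset Printing Implicit Defensive.
Import GRing.Theory.
Local Open Scope ring_scope.

(* With phi y := y (1 - y), the values F_n(1, x) = rd3val (n - 1) x obey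
   F_{m+2} = F_{m+1} - x F_m with F_1 = F_2 = 1; comparing with the same recurrence
   for (y^m - (1 - y)^m) / (2y - 1) gives F_n(1, phi y) = g(y) for y <> 1/2, and
   F_n(1, phi (1/2)) = n / 2^(n-1).  Since every element of F_q is a square in
   F_{q^2}, phi maps S onto F_q minus phi (1/2), with fibres {y, 1 - y} of size two.
   So F_n(1, _) is injective on F_q \ {phi (1/2)} iff g is 2-to-1 on S, and it
   misses F_n(1, phi (1/2)) there iff g never takes the value n / 2^(n-1). *)

Lemma rd3coefE m i : (i.*2 <= m.+1)%N -> rd3coef m.+1 i = 'C(m - i, i).
Proof.
move=> hi; rewrite /rd3coef.
have -> : (m.+1 - i.*2 = m.+1 - i - i)%N by lia.
by rewrite -mul_bin_down mulKn; [congr 'C(_, _); lia | lia].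
Qed.

Lemma binS_subn m i : 'C(m.+1 - i, i.+1) = ('C(m - i, i.+1) + 'C(m - i, i))%N.
Proof.
have [le_im | lt_mi] := leqP i m; first by rewrite subSn // binS.
have -> : (m.+1 - i = 0)%N by lia.
have -> : (m - i = 0)%N by lia.
by rewrite !bin0n; case: i lt_mi.
Qed.

Section Recurrence.
Variable R : comNzRingType.

Definition rd3val (m : nat) (x : R) : R :=
  \sum_(i < m.+1) 'C(m - i, i)%:R * (- x) ^+ i.

Lemma rd3val_sum m x N : (m./2 < N)%N ->
  rd3val m x = \sum_(i < N) 'C(m - i, i)%:R * (- x) ^+ i.
Proof.
pose t i := 'C(m - i, i)%:R * (- x) ^+ i : R.
suff trunc K : (m./2 < K)%N -> \sum_(i < K) t i = \sum_(i < m./2.+1) t i.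
  by move=> hN; rewrite /rd3val !trunc // ltn_half_double; lia.
move=> hK; rewrite (big_ord_widen K t hK) [RHS]big_mkcond; apply: eq_bigr => i _.
case: ltnP => // hi; rewrite /t bin_small ?mul0r //.
by move: hi; rewrite ltn_half_double; lia.
Qed.

Lemma rd3val0 x : rd3val 0 x = 1.
Proof. by rewrite /rd3val big_ord1 mul1r. Qed.

Lemma rd3val1 x : rd3val 1 x = 1.
Proof. by rewrite /rd3val big_ord_recl big_ord1 /= bin0n mul0r addr0 mul1r. Qed.

Lemma rd3valSS m x : rd3val m.+2 x = rd3val m.+1 x - x * rd3val m x.
Proof.
rewrite (@rd3val_sum m x m.+2) ?(@rd3val_sum m.+1 x m.+3) ?ltn_half_double; try lia.
rewrite /rd3val big_ord_recl [X in _ = X - _]big_ord_recl /= !subn0 !bin0 -addrA.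
congr (_ + _); rewrite mulr_sumr -sumrB; apply: eq_bigr => i _.
by rewrite /bump /= !add1n !subSS binS_subn natrD exprS; ring.
Qed.

Lemma rd3val_unique (u : nat -> R) x :
  u 0%N = 1 -> u 1%N = 1 -> (forall m, u m.+2 = u m.+1 - x * u m) ->
  forall m, u m = rd3val m x.
Proof.
move=> u0 u1 uSS m; suff: u m = rd3val m x /\ u m.+1 = rd3val m.+1 x by case.
elim: m => [|m [IHm IHm1]]; first by rewrite u0 u1 rd3val0 rd3val1.
by rewrite uSS rd3valSS IHm IHm1.
Qed.

Lemma rmorph_rd3val (f : {rmorphism R -> R}) m x : f (rd3val m x) = rd3val m (f x).
Proof.
rewrite rmorph_sum; apply: eq_bigr => i _.
by rewrite rmorphM rmorph_nat rmorphXn rmorphN.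
Qed.

Lemma horner_rdickson3 n x :
  (rdickson3 n (1 : R)).[x] = if n is m.+1 then rd3val m x else 0.
Proof.
case: n => [|m]; first by rewrite horner0.
rewrite /rdickson3 horner_sum (@rd3val_sum m x (m.+1)./2.+1); last first.
  by rewrite ltnS; apply: half_leq.
apply: eq_bigr => i _; rewrite hornerZ expr1n mulr1 horner_exp hornerN hornerX.
rewrite rd3coefE //; have := ltn_ord i.
by rewrite ltnS leqNgt ltn_half_double -leqNgt.
Qed.

End Recurrence.

Section Phi.
Variable L : fieldType.
Hypothesis two_neq0 : 2%:R != 0 :> L.

Definition phi (y : L) : L := y * (1 - y).

Lemma phi_1sub y : phi (1 - y) = phi y.
Proof. by rewrite /phi; ring. Qed.

Lemma eq_phi y z : phi z = phi y -> z = y \/ z = 1 - y.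
Proof.
move/esym/eqP; rewrite -subr_eq0.
have -> : phi y - phi z = (z - y) * (z - (1 - y)) by rewrite /phi; ring.
by rewrite mulf_eq0 !subr_eq0 => /orP[/eqP | /eqP]; [left | right].
Qed.

Lemma half_1sub : 1 - 2%:R^-1 = 2%:R^-1 :> L.
Proof. by field. Qed.

Lemma eq_1sub_half (y : L) : (1 - y == y) = (y == 2%:R^-1).
Proof.
apply/eqP/eqP => [h | ->]; last exact: half_1sub.
have -> : y = 2%:R^-1 * (y + y) by field.
by rewrite -{1}h subrK mulr1.
Qed.

Lemma phi_eq_half y : (phi y == phi 2%:R^-1) = (y == 2%:R^-1).
Proof.
apply/eqP/eqP => [/eq_phi[] // -> | -> //]; exact: half_1sub.
Qed.

Lemma rd3val_phi m y : y != 2%:R^-1 ->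
  rd3val m (phi y) = (y ^+ m.+1 - (1 - y) ^+ m.+1) / (2%:R * y - 1).
Proof.
move=> y_neq; have ny : 2%:R * y - 1 != 0.
  have -> : 2%:R * y - 1 = y - (1 - y) by ring.
  by rewrite subr_eq0 eq_sym eq_1sub_half.
symmetry; apply: (rd3val_unique (u := fun k => (y ^+ k.+1 - (1 - y) ^+ k.+1) / _))
  => [||k] /=; rewrite ?expr1 ?expr2; try by field.
by rewrite /phi !(exprS y) !(exprS (1 - y)); field.
Qed.

Lemma rd3val_phi_half m : rd3val m (phi 2%:R^-1) = m.+1%:R / 2%:R ^+ m.
Proof.
symmetry; apply: (rd3val_unique (u := fun k => k.+1%:R / 2%:R ^+ k))
  => [||k] /=; rewrite ?expr0 ?expr1 ?divr1 ?divff //.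
by rewrite /phi !exprS -[k.+3]addn2 -[k.+2]addn1 !natrD; field; rewrite expf_neq0.
Qed.

End Phi.
Arguments phi {L}.

Section Fibers.
Variables (T U : finType) (V : eqType).

Lemma bij_on_iff_inj (A : {set T}) (f : T -> T) : {in A, forall x, f x \in A} ->
  bij_on A f <-> {in A &, injective f}.
Proof.
move=> fA; split=> [[_ finj _] // | finj]; split=> // y yA.
have sub_fA : f @: A \subset A by apply/subsetP => _ /imsetP[x xA ->]; exact: fA.
have /eqP fAE : f @: A == A by rewrite eqEcard sub_fA (card_in_imset finj) leqnn.
by move: yA; rewrite -{1}fAE => /imsetP[x xA ->]; exists x.
Qed.

Lemma inj_in_setD1 (A : {set T}) (a : T) (f : T -> V) : a \in A ->
  {in A &, injective f} <->
  {in A :\ a &, injective f} /\ {in A :\ a, forall x, f x != f a}.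
Proof.
move=> aA; split=> [finj | [finj fa]].
  split=> [x y /setD1P[_ xA] /setD1P[_ yA] | x /setD1P[xa xA]]; first exact: finj.
  by apply: contra xa => /eqP/finj->.
move=> x y xA yA; have [-> | xa] := eqVneq x a; have [-> | ya] := eqVneq y a => //.
- by move/esym/eqP; rewrite (negbTE (fa y _)) // in_setD1 ya yA.
- by move/eqP; rewrite (negbTE (fa x _)) // in_setD1 xa xA.
by apply: finj; rewrite in_setD1 ?xa ?ya.
Qed.

Lemma inj_in_imset_fibers (S : {set T}) (h : T -> U) (f : U -> V) (k : nat) :
  {in S, forall y, #|[set z in S | h z == h y]| = k} ->
  {in h @: S &, injective f} <->
  {in S, forall y, #|[set z in S | f (h z) == f (h y)]| = k}.
Proof.
move=> hfib.
have sub y : [set z in S | h z == h y] \subset [set z in S | f (h z) == f (h y)].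
  by apply/subsetP => z; rewrite !inE => /andP[zS /eqP hzy]; rewrite zS hzy eqxx.
split=> [finj y yS | ffib _ _ /imsetP[y1 y1S ->] /imsetP[y2 y2S ->] f12].
  rewrite -(hfib y yS); congr #|pred_of_set _|; apply/setP => z; rewrite !inE.
  by apply: andb_id2l => zS; apply/eqP/eqP => [/finj | -> //]; apply; apply: imset_f.
have : [set z in S | h z == h y1] == [set z in S | f (h z) == f (h y1)].
  by rewrite eqEcard sub (hfib y1 y1S) (ffib y1 y1S) leqnn.
by move/eqP/setP/(_ y2); rewrite !inE y2S f12 eqxx => /eqP.
Qed.

End Fibers.

Lemma finField_sqrt (F : finFieldType) (d : F) m :
  #|F| = (m.*2).+1 -> d ^+ m = 1 -> exists s, s ^+ 2 = d.
Proof.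
move=> cardF dm.
(* X^2 - d divides X^#|F| - X, which splits into linear factors over F. *)
have : ('X^2 - d%:P) %| \prod_(x : F) ('X - x%:P).
  rewrite -finField_genPoly cardF.
  have -> : 'X^((m.*2).+1) - 'X = 'X * (('X^2) ^+ m - (d%:P) ^+ m) :> {poly F}.
    by rewrite -polyC_exp dm mulrBr mulr1 -exprM mul2n -exprS.
  by rewrite subrXX mulrCA dvdp_mulr.
case/dvdp_prod_XsubC => msk; case: (mask msk _) => [|a s] Hm.
  by move: (eqp_size Hm); rewrite big_nil size_XnsubC // size_poly1.
exists a; have : root ('X^2 - d%:P) a.
  by rewrite (eqp_root Hm) big_cons rootM root_XsubC eqxx.
by rewrite rootE !hornerE subr_eq0 => /eqP.
Qed.

Section QuadraticExtension.
Variables (L : finFieldType) (q : nat).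
Hypotheses (qchar : [pchar L].-nat q) (q_odd : odd q) (two_neq0 : 2%:R != 0 :> L)
  (cardL : #|L| = (q ^ 2)%N).

Local Notation A := (Fq L q).
Local Notation S := (Sset L q).

Definition frobq (x : L) : L := x ^+ q.

Lemma frobq_is_zmod_morphism : zmod_morphism frobq.
Proof. by move=> x y; rewrite /frobq exprDn_pchar // exprNn_pchar. Qed.

Lemma frobq_is_monoid_morphism : monoid_morphism frobq.
Proof. by split=> [|x y]; rewrite /frobq ?expr1n // exprMn. Qed.

HB.instance Definition _ := GRing.isZmodMorphism.Build L L frobq frobq_is_zmod_morphism.
HB.instance Definition _ :=
  GRing.isMonoidMorphism.Build L L frobq frobq_is_monoid_morphism.

Lemma mem_Fq x : (x \in A) = (frobq x == x).
Proof. by rewrite inE. Qed.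

Lemma mem_Sset y :
  (y \in S) = (y != 2%:R^-1) && ((frobq y == y) || (frobq y == 1 - y)).
Proof. by rewrite !inE orbC. Qed.

Lemma Fq_sqrt d : d \in A -> exists s, s ^+ 2 = d.
Proof.
rewrite mem_Fq => /eqP dq.
have [-> | d_neq0] := eqVneq d 0; first by exists 0; rewrite expr0n.
have [r q_eq] : exists r, q = r.*2.+1.
  by exists q./2; rewrite -[LHS]odd_double_half q_odd.
have d_r : d ^+ r.*2 = 1.
  by apply: (mulfI d_neq0); rewrite mulr1 -exprS -q_eq.
apply: (finField_sqrt (m := (r.*2 * r.+1)%N)); first by rewrite cardL q_eq -!addnn; nia.
by rewrite exprM d_r expr1n.
Qed.

Lemma horner_rdickson3_Fq n c : c \in A -> (rdickson3 n (1 : L)).[c] \in A.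
Proof.
rewrite !mem_Fq horner_rdickson3; case: n => [|m]; first by rewrite rmorph0.
by move=> /eqP fc; rewrite rmorph_rd3val /= fc.
Qed.

Lemma horner_rdickson3_phi n y : y \in S -> (rdickson3 n (1 : L)).[phi y] = gmap n y.
Proof.
rewrite mem_Sset horner_rdickson3 /gmap => /andP[y_neq _].
by case: n => [|m]; [rewrite !expr0 subrr mul0r | rewrite rd3val_phi].
Qed.

Lemma horner_rdickson3_half n :
  (rdickson3 n (1 : L)).[phi 2%:R^-1] = n%:R / 2%:R ^+ n.-1.
Proof.
by rewrite horner_rdickson3; case: n => [|m]; rewrite ?mul0r ?rd3val_phi_half.
Qed.

Lemma frobq_phi y : frobq (phi y) = phi (frobq y).
Proof. by rewrite rmorphM rmorphB rmorph1. Qed.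

Lemma Sset_1sub y : y \in S -> 1 - y \in S.
Proof.
rewrite !mem_Sset rmorphB rmorph1 /= => /andP[y_neq frob_y].
by rewrite -[X in _ != X]half_1sub // !(inj_eq (addrI 1)) !(inj_eq oppr_inj) y_neq.
Qed.

Lemma phi_Sset y : y \in S -> phi y \in A :\ phi 2%:R^-1.
Proof.
rewrite mem_Sset in_setD1 mem_Fq phi_eq_half // frobq_phi => /andP[-> /orP[] /eqP ->] //=.
by rewrite phi_1sub.
Qed.

Lemma phi_imset_Sset : phi @: S = A :\ phi 2%:R^-1.
Proof.
apply/setP => x; apply/imsetP/idP => [[y yS ->] | ]; first exact: phi_Sset.
rewrite in_setD1 mem_Fq => /andP[x_neq /eqP fx].
pose d : L := 1 - 2%:R * 2%:R * x.
have [s s2] : exists s, s ^+ 2 = d.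
  by apply: Fq_sqrt; rewrite mem_Fq /d rmorphB rmorph1 !rmorphM rmorph_nat /= fx.
pose y : L := (1 + s) / 2%:R.
have phi_y : phi y = x.
  have four_neq0 : 4%:R != 0 :> L by rewrite (natrM _ 2 2) mulf_neq0.
  have -> : x = (1 - s ^+ 2) / (2%:R * 2%:R) by rewrite s2 /d; field.
  by rewrite /phi /y; field; rewrite four_neq0.
exists y => //; rewrite mem_Sset -(phi_eq_half two_neq0) phi_y x_neq /=.
have : phi (frobq y) = phi y by rewrite -frobq_phi phi_y fx.
by case/eq_phi => ->; rewrite eqxx ?orbT.
Qed.

Lemma card_phi_fiber y : y \in S -> #|[set z in S | phi z == phi y]| = 2%N.
Proof.
move=> yS; have := yS; rewrite mem_Sset => /andP[y_neq _].
have -> : [set z in S | phi z == phi y] = [set y; 1 - y].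
  apply/setP => z; rewrite in_set in_set2.
  apply/andP/orP => [[_ /eqP/eq_phi[]->] | [] /eqP->].
  - by left.
  - by right.
  - by split.
  - by rewrite phi_1sub Sset_1sub.
by rewrite cards2 [y == _]eq_sym eq_1sub_half // y_neq.
Qed.

Lemma rdickson3_perm_Fq n :
  bij_on A (fun c : L => (rdickson3 n (1 : L)).[c]) <->
  (forall y, y \in S -> #|[set z in S | gmap n z == gmap n y]| = 2%N) /\
  (forall y, y \in S -> gmap n y != n%:R / 2%:R ^+ n.-1).
Proof.
set f := fun c : L => _.
have half_A : phi 2%:R^-1 \in A by rewrite mem_Fq frobq_phi fmorphV rmorph_nat.
have fib_iff : {in phi @: S &, injective f} <->
    {in S, forall y, #|[set z in S | gmap n z == gmap n y]| = 2%N}.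
  have fibE y : y \in S ->
      [set z in S | gmap n z == gmap n y] = [set z in S | f (phi z) == f (phi y)].
    move=> yS; apply: eq_finset => z; apply: andb_id2l => zS.
    by rewrite /f !horner_rdickson3_phi.
  apply: (iff_trans (inj_in_imset_fibers f card_phi_fiber)).
  by split=> fib y yS; [rewrite fibE | rewrite -fibE]; rewrite ?fib.
have neq_iff : {in phi @: S, forall x, f x != f (phi 2%:R^-1)} <->
    {in S, forall y, gmap n y != n%:R / 2%:R ^+ n.-1}.
  rewrite /f horner_rdickson3_half; split=> [fne y yS | gne _ /imsetP[y yS ->]].
    by rewrite -horner_rdickson3_phi // fne // imset_f.
  by rewrite horner_rdickson3_phi // gne.
apply: (iff_trans (bij_on_iff_inj (@horner_rdickson3_Fq n))).
apply: (iff_trans (inj_in_setD1 f half_A)); rewrite -phi_imset_Sset.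
by split=> -[h1 h2]; split; [apply/fib_iff | apply/neq_iff | apply/fib_iff | apply/neq_iff].
Qed.

End QuadraticExtension.

Theorem theorem2p10 (p k q n : nat) (L : finFieldType) :
  prime p -> odd p -> (0 < k)%N -> q = (p ^ k)%N -> #|L| = (q ^ 2)%N ->
  (bij_on (Fq L q) (fun c : L => (rdickson3 n (1 : L)).[c])
   <->
   ((forall y, y \in Sset L q ->
       #|[set z in Sset L q | gmap n z == gmap n y]| = 2%N) /\
    (forall y, y \in Sset L q ->
       gmap n y != n%:R / (2%:R) ^+ (n.-1)))).
Proof.
move=> p_prime p_odd _ -> cardL.
have charL : p \in [pchar L].
  by apply: (@card_finPcharP _ _ (k * 2)); rewrite ?cardL ?expnM.
have two_neq0 : 2%:R != 0 :> L.
  apply/negP => two0; have : 2%N \in [pchar L] by rewrite inE two0.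
  by rewrite (pcharf_eq charL) inE => /eqP p2; rewrite -p2 in p_odd.
apply: rdickson3_perm_Fq => //; last by rewrite oddX p_odd orbT.
by rewrite (eq_pnat _ (pcharf_eq charL)) pnatX pnat_id.
Qed.
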